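(* Let $G$ be a finite simple graph and let $\tau,\tau'$ be two threshold assignments for the vertices of $G$ with $\overline{\tau}=\overline{\tau'}$. Let $r$ be an integer with $dyn_{\tau}(G)\leq r\leq dyn_{\tau'}(G)$. Then there exists a threshold assignment $\tau''$ with $\overline{\tau''}=\overline{\tau}$ such that $dyn_{\tau''}(G)=r$.
   Context: A threshold assignment is a function $\tau:V(G)\to\{0,1,2,\dots\}$; its average is $\overline{\tau}=\sum_{v\in V(G)}\tau(v)/|V(G)|$. A set $D\subseteq V(G)$ is a $\tau$-dynamic monopoly ($\tau$-dynamo) if for some $k\ge 0$ the vertex set can be partitioned into $D_0=D, D_1,\dots,D_k$ where for each $1\le i\le k$, $D_i$ consists of all vertices (outside $D_0\cup\dots\cup D_{i-1}$) having at least $\tau(v)$ neighbors in $D_0\cup\dots\cup D_{i-1}$. $dyn_\tau(G)$ denotes the minimum size of a $\tau$-dynamo of $G$. *)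

From HB Require Import structures.
From mathcomp Require Import all_boot all_order all_algebra.
Set Implicit Arguments. Unset Strict Implicit. Unset Printing Implicit Defensive.
Import Order.TTheory GRing.Theory Num.Theory.

Definition simple_graph (T : finType) (e : rel T) : Prop :=
  symmetric e /\ irreflexive e.

Definition avg_threshold (T : finType) (tau : T -> nat) : rat :=
  ((\sum_(v : T) tau v)%:R / #|T|%:R)%R.

Definition nbrs_in (T : finType) (e : rel T) (S : {set T}) (v : T) : nat :=
  #|[set u in S | e v u]|.

(* one round: D_0 u ... u D_{i-1}  |->  D_0 u ... u D_i, where D_i is the set of
   vertices outside the current union having >= tau v neighbours in it *)
Definition dyn_step (T : finType) (e : rel T) (tau : T -> nat) (S : {set T})
  : {set T} :=
  S :|: [set v | (v \notin S) && (tau v <= nbrs_in e S v)].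

Definition is_dynamo (T : finType) (e : rel T) (tau : T -> nat) (D : {set T})
  : Prop :=
  exists k : nat, iter k (dyn_step e tau) D = [set: T].

(* dyn_tau(G) = r : r is the minimum size of a tau-dynamo *)
Definition dyn_eq (T : finType) (e : rel T) (tau : T -> nat) (r : nat) : Prop :=
  (exists D : {set T}, is_dynamo e tau D /\ #|D| = r) /\
  (forall D : {set T}, is_dynamo e tau D -> r <= #|D|).

From mathcomp Require Import all_boot all_order all_algebra.
From Stdlib Require Import Classical.
From Stdlib Require Wf_nat.
From mathcomp Require Import zify.
Import GRing.Theory Num.Theory.

Set Implicit Arguments.
Unset Strict Implicit.
Unset Printing Implicit Defensive.

(* Lowering thresholds can only shrink the minimum dynamo, and raising the
   threshold of a single vertex w enlarges it by at most one, since adding w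
   to an old dynamo gives a new one.  Starting from tau, repeatedly move one
   unit of threshold from a vertex where tau exceeds tau' to a vertex where it
   falls short of it: the sum is preserved, dyn grows by at most one per move,
   and after finitely many moves tau' is reached.  A discrete intermediate
   value argument therefore hits every r between dyn_tau and dyn_tau'. *)

Lemma ex_minimum_nat (P : nat -> Prop) :
  (exists n, P n) -> exists m, P m /\ forall n, P n -> m <= n.
Proof.
move=> exP.
have [m [[Pm minm] _]] := Wf_nat.dec_inh_nat_subset_has_unique_least_element
  P (fun n => classic (P n)) exP.
by exists m; split=> // n /minm /leP.
Qed.

Lemma sum_leq_eq (I : finType) (f g : I -> nat) :
  (forall i, f i <= g i) -> \sum_i f i = \sum_i g i -> f =1 g.
Proof.
move=> le_fg eq_sum i.
have [_ /esym] := leqif_sum (fun i (_ : true) => leqif_eq (le_fg i)).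
by rewrite eq_sum eqxx => /forall_inP /(_ i isT) /eqP.
Qed.

(* Both sides are moved so that no truncated subtraction occurs. *)
Lemma sum_agree_off2 (I : finType) (F G : I -> nat) (u w : I) : u != w ->
  (forall x, x != u -> x != w -> F x = G x) ->
  \sum_x F x + G u + G w = \sum_x G x + F u + F w.
Proof.
move=> uw FG.
have split_uw (K : I -> nat) :
    \sum_x K x = K u + K w + \sum_(x | (x != u) && (x != w)) K x.
  rewrite (bigD1 u) // (bigD1 w) 1?eq_sym //= addnA.
  by congr (_ + _); apply: eq_bigl => x; rewrite andbT.
rewrite (split_uw F) (split_uw G) (eq_bigr G) => [|x /andP[]]; last exact: FG.
lia.
Qed.

Lemma shift_threshold_towards (T : finType) (tau tau' : T -> nat) (u : T) :
  \sum_v tau v = \sum_v tau' v -> tau' u < tau u ->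
  exists tau1 w, [/\ \sum_v tau1 v = \sum_v tau' v,
    \sum_v (tau1 v - tau' v) < \sum_v (tau v - tau' v) &
    forall x, x != w -> tau1 x <= tau x].
Proof.
move=> sum_tau lt_u.
have [/existsP[w lt_w] | /existsPn tau'_le] := boolP [exists w, tau w < tau' w];
  last first.
  have le_tau' v : tau' v <= tau v by rewrite leqNgt tau'_le.
  have := sum_leq_eq le_tau' (esym sum_tau) u.
  by move=> eq_u; move: lt_u; rewrite eq_u ltnn.
have uw : u != w by apply: contraTneq lt_u => ->; rewrite -leqNgt ltnW.
pose tau1 x := if x == u then (tau u).-1 else if x == w then (tau w).+1 else tau x.
have tau1_off x : x != u -> x != w -> tau1 x = tau x.
  by rewrite /tau1 => /negbTE -> /negbTE ->.
have tau1_u : tau1 u = (tau u).-1 by rewrite /tau1 eqxx.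
have tau1_w : tau1 w = (tau w).+1 by rewrite /tau1 eq_sym (negbTE uw) eqxx.
exists tau1, w; split.
- by have := sum_agree_off2 uw tau1_off; rewrite tau1_u tau1_w -sum_tau; lia.
- have := sum_agree_off2 (F := fun v => tau1 v - tau' v) uw
    (fun x xu xw => congr1 (subn^~ _) (tau1_off x xu xw)).
  by rewrite /= tau1_u tau1_w; lia.
- move=> x; case: (eqVneq x u) => [-> _ | xu /tau1_off -> //].
  by rewrite tau1_u leq_pred.
Qed.

Lemma eq_avg_threshold (T : finType) (f g : T -> nat) :
  avg_threshold f = avg_threshold g <-> \sum_v f v = \sum_v g v.
Proof.
rewrite /avg_threshold; split=> [eq_avg|->] //.
have [T0 | T_gt0] := posnP #|T|.
  by rewrite !big_pred0 // => v; have := card0_eq T0 v; rewrite !inE.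
have nz : (#|T|%:R != 0 :> rat)%R by rewrite pnatr_eq0 -lt0n.
by apply/eqP; rewrite -(eqr_nat rat) (GRing.divIf nz eq_avg).
Qed.

Section Dynamos.

Variables (T : finType) (e : rel T).

Lemma subset_dyn_step tau (S : {set T}) : S \subset dyn_step e tau S.
Proof. exact: subsetUl. Qed.

Lemma subset_iter_dyn_step tau (S : {set T}) k :
  S \subset iter k (dyn_step e tau) S.
Proof.
elim: k => [|k IH] /=; first exact: subxx.
exact: subset_trans IH (subset_dyn_step _ _).
Qed.

Lemma dyn_step_mono tau sigma (S S' : {set T}) : S \subset S' ->
  (forall u, u \notin S' -> sigma u <= tau u) ->
  dyn_step e tau S \subset dyn_step e sigma S'.
Proof.
move=> sSS' le_sigma; apply/subsetP => x.
rewrite !inE => /orP[xS | /andP[_ tau_x]]; first by rewrite (subsetP sSS').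
case xS': (x \in S') => //=.
apply: leq_trans (le_sigma x _) _; first by rewrite xS'.
apply: leq_trans tau_x (subset_leq_card _); apply/subsetP => y.
by rewrite !inE => /andP[/(subsetP sSS') -> ->].
Qed.

Lemma iter_dyn_step_mono tau sigma (S S' : {set T}) k : S \subset S' ->
  (forall u, u \notin S' -> sigma u <= tau u) ->
  iter k (dyn_step e tau) S \subset iter k (dyn_step e sigma) S'.
Proof.
move=> sSS' le_sigma; elim: k => [|k IH] //=.
apply: dyn_step_mono => // u u_out; apply: le_sigma; apply: contra u_out.
exact: (subsetP (subset_iter_dyn_step _ _ _)).
Qed.

Lemma is_dynamo_mono tau sigma (D D' : {set T}) : D \subset D' ->
  (forall u, u \notin D' -> sigma u <= tau u) ->
  is_dynamo e tau D -> is_dynamo e sigma D'.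
Proof.
move=> sDD' le_sigma [k dynD]; exists k; apply/eqP.
by rewrite eqEsubset subsetT -dynD iter_dyn_step_mono.
Qed.

Lemma dyn_eq_exists tau : exists m, dyn_eq e tau m.
Proof.
have [m [[D [dynD <-]] minm]] :
    exists m, (exists D, is_dynamo e tau D /\ #|D| = m) /\
              forall n, (exists D, is_dynamo e tau D /\ #|D| = n) -> m <= n.
  by apply: ex_minimum_nat; exists #|[set: T]|, [set: T]; split=> //; exists 0.
exists #|D|; split; first by exists D.
by move=> D' dynD'; apply: minm; exists D'.
Qed.

Lemma dyn_eq_leq tau sigma m n : (forall u, sigma u <= tau u) ->
  dyn_eq e tau m -> dyn_eq e sigma n -> n <= m.
Proof.
move=> le_sigma [[D [dynD <-]] _] [_ minn]; apply: minn.
exact: is_dynamo_mono (subxx _) (fun u _ => le_sigma u) dynD.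
Qed.

Lemma dyn_eq_raise1 tau sigma w m n : (forall u, u != w -> sigma u <= tau u) ->
  dyn_eq e tau m -> dyn_eq e sigma n -> n <= m.+1.
Proof.
move=> le_sigma [[D [dynD <-]] _] [_ minn].
apply: leq_trans (minn (w |: D) _) _; last by rewrite cardsU1 addnC -addn1 leq_add2l leq_b1.
apply: is_dynamo_mono dynD; first exact: subsetUr.
by move=> u; rewrite !inE negb_or => /andP[/le_sigma].
Qed.

Variables (tau' : T -> nat) (d' : nat).
Hypothesis dyn_tau' : dyn_eq e tau' d'.

Lemma dyn_eq_intermediate tau d r :
  \sum_v tau v = \sum_v tau' v -> dyn_eq e tau d -> d <= r <= d' ->
  exists tau'', \sum_v tau'' v = \sum_v tau' v /\ dyn_eq e tau'' r.
Proof.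
have [n] := ubnP (\sum_v (tau v - tau' v)).
elim: n tau d => // n IH tau d /ltnSE excess_n sum_tau dyn_tau /andP[le_dr le_rd'].
have [le_rd | lt_dr] := leqP r d.
  by exists tau; have -> : r = d by apply/eqP; rewrite eqn_leq le_rd le_dr.
have [/existsP[u lt_u] | /existsPn tau_le] := boolP [exists u, tau' u < tau u].
  have [tau1 [w [sum_tau1 excess_tau1 le_tau1]]] :=
    shift_threshold_towards sum_tau lt_u.
  have [d1 dyn_tau1] := dyn_eq_exists tau1.
  have le_d1r := leq_trans (dyn_eq_raise1 le_tau1 dyn_tau dyn_tau1) lt_dr.
  by apply: (IH tau1 d1) => //; [apply: leq_trans excess_n | rewrite le_d1r].
have le_tau v : tau v <= tau' v by rewrite leqNgt tau_le.
have eq_tau := sum_leq_eq le_tau sum_tau.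
have := dyn_eq_leq (fun v => eq_leq (esym (eq_tau v))) dyn_tau dyn_tau'.
by move=> /(leq_trans le_rd'); rewrite leqNgt lt_dr.
Qed.

End Dynamos.

Theorem proposition1 (T : finType) (e : rel T) (tau tau' : T -> nat)
  (d d' r : nat) :
  simple_graph e ->
  avg_threshold tau = avg_threshold tau' ->
  dyn_eq e tau d -> dyn_eq e tau' d' ->
  d <= r <= d' ->
  exists tau'' : T -> nat,
    avg_threshold tau'' = avg_threshold tau /\ dyn_eq e tau'' r.
Proof.
move=> _ /eq_avg_threshold sum_tau dyn_tau dyn_tau' bounds_r.
have [tau'' [sum_tau'' dyn_tau'']] :=
  dyn_eq_intermediate dyn_tau' sum_tau dyn_tau bounds_r.
by exists tau''; split=> //; apply/eq_avg_threshold; rewrite sum_tau'' sum_tau.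
Qed.
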